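(* Let $(S,M)$ be a surface with marked points and empty boundary and $T$ an ideal triangulation with property (T3). Then the adjacency quiver $Q$ of $T$ satisfies condition $(\star)$ if and only if $T$ has property (T3$\tfrac12$).
   Context: $(S,M)$: $S$ compact, connected, oriented surface without boundary, $M$ a finite non-empty set of punctures. Arcs incident to a puncture are counted with multiplicity (an arc with both ends at the puncture counted twice). Property (T3): at each puncture there are at least three arcs of $T$ incident to it. Property (T3$\tfrac12$): $T$ has (T3) and every arc of $T$ has an endpoint at which at least four arcs are incident. The adjacency quiver $Q$ has the arcs as vertices and an arrow $i\to j$ for each puncture $p$ and each occurrence of $j$ immediately following $i$ counterclockwise around $p$ (equivalently, for each corner at $p$ of a triangle with sides $i,j$). For such an arrow $\alpha$, $g(\alpha)$ is the arrow $j\to\ell$ where $\ell$ follows $j$ counterclockwise around $p$, and $f(\alpha)$ is the arrow $j\to k$ where $k$ is the third side of the triangle, at the other endpoint of $j$ in that triangle. $n_\alpha$ denotes the size of the $g$-orbit of $\alpha$, i.e. the least $r>0$ with $g^r(\alpha)=\alpha$. Condition $(\star)$: for every arrow $\alpha$, $n_\alpha\ge 4$ or $n_{f(\alpha)}\ge 4$. *)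

(* Combinatorial model of an ideal triangulation of a
   compact connected oriented surface without boundary, with punctures:
   a (triangular) combinatorial map on a finite set of darts (= arc ends).
   - sigma : successor of a dart counterclockwise around its puncture;
   - iota  : the other end of the same arc (fixed-point-free involution).
   Punctures = sigma-orbits, arcs = iota-orbits, triangles = orbits of
   iota \o sigma (all of size 3).  Corners of triangles = darts. *)
From mathcomp Require Import all_boot fingroup perm.

Set Implicit Arguments.
Unset Strict Implicit.
Unset Printing Implicit Defensive.

Section Triangulation.
Variables (D : finType) (sigma iota : {perm D}).

(* the face permutation: from the corner (d, sigma d) at one end of the
   arc of sigma d to the corner of the same triangle at its other end *)
Definition face_step (d : D) : D := iota (sigma d).

Definition is_ideal_triangulation : Prop :=
  [/\ 0 < #|D|,
      (forall d, iota (iota d) = d /\ iota d != d),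
      (forall d, fingraph.order face_step d = 3) &
      (forall d e, connect (fun x y => (y == sigma x) || (y == iota x)) d e)].

Definition arc_of (d : D) : {set D} := [set d; iota d].

(* number of arcs incident to the puncture at d, counted with multiplicity *)
Definition puncture_degree (d : D) : nat := fingraph.order sigma d.

Definition T3 : Prop := forall d, 3 <= puncture_degree d.

Definition T3half : Prop :=
  T3 /\ forall d, 4 <= puncture_degree d \/ 4 <= puncture_degree (iota d).

(* Adjacency quiver: vertices = arcs, arrows = corners = darts;
   the arrow d goes from arc_of d to arc_of (sigma d). *)
Definition quiver_source (alpha : D) : {set D} := arc_of alpha.
Definition quiver_target (alpha : D) : {set D} := arc_of (sigma alpha).

Definition quiver_g (alpha : D) : D := sigma alpha.
(* f(alpha): arrow j -> k at the other endpoint of j in the same triangle *)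
Definition quiver_f (alpha : D) : D := face_step alpha.

Definition n_arrow (alpha : D) : nat := fingraph.order quiver_g alpha.

Definition star_condition : Prop :=
  forall alpha, 4 <= n_arrow alpha \/ 4 <= n_arrow (quiver_f alpha).

End Triangulation.

(* The g-orbit of an arrow is the sigma-orbit of its corner, so n_alpha is the
   degree of the puncture at alpha, and n_(f alpha) is the degree of the
   puncture at the far end of the arc of sigma alpha.  Since sigma permutes
   the darts and preserves puncture degrees, (star) says exactly that every
   arc has an endpoint of degree at least four. *)
From mathcomp Require Import all_boot fingroup perm.

Set Implicit Arguments.
Unset Strict Implicit.
Unset Printing Implicit Defensive.

Lemma order_perm (T : finType) (s : {perm T}) (x : T) :
  fingraph.order s (s x) = fingraph.order s x.
Proof.
by apply/esym/eq_card/fingraph.same_fconnect1; exact: perm_inj.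
Qed.

Section StarCondition.
Variables (D : finType) (sigma iota : {perm D}).

Lemma puncture_degree_sigma (d : D) :
  puncture_degree sigma (sigma d) = puncture_degree sigma d.
Proof. exact: order_perm. Qed.

Lemma n_arrowE (alpha : D) : n_arrow sigma alpha = puncture_degree sigma alpha.
Proof. by []. Qed.

Lemma n_arrow_quiver_f (alpha : D) :
  n_arrow sigma (quiver_f sigma iota alpha)
  = puncture_degree sigma (iota (sigma alpha)).
Proof. by []. Qed.

Lemma star_conditionE :
  star_condition sigma iota <->
  forall d, 4 <= puncture_degree sigma d \/ 4 <= puncture_degree sigma (iota d).
Proof.
rewrite /star_condition; split=> star d.
- have := star ((sigma^-1)%g d).
  by rewrite n_arrowE n_arrow_quiver_f permKV -puncture_degree_sigma permKV.
- by rewrite n_arrowE n_arrow_quiver_f -puncture_degree_sigma.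
Qed.

End StarCondition.

Theorem lemma2p5 (D : finType) (sigma iota : {perm D}) :
  is_ideal_triangulation sigma iota ->
  T3 sigma ->
  (star_condition sigma iota <-> T3half sigma iota).
Proof.
move=> _ t3; apply: (iff_trans (star_conditionE sigma iota)).
by split=> [star | [_ star]].
Qed.
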